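(* Let $G$ be a finite simple bipartite graph with bipartition $(X,Y)$ such that no vertex in $X$ is adjacent to every vertex of $Y$. Then $$\sum\left(\frac{|X|d(x)-|Y|d(y)}{(|X|-d(y))(|Y|-d(x))}\;:\; x\in X,\ y\in Y,\ xy\notin E(G)\right)\geq 0.$$
   Context: $d(v)$ denotes the degree of a vertex $v$ in $G$; the sum ranges over all pairs $(x,y)$ with $x\in X$, $y\in Y$ and $x,y$ non-adjacent. *)

From mathcomp Require Import all_boot all_order all_algebra.
Set Implicit Arguments. Unset Strict Implicit. Unset Printing Implicit Defensive.

Definition simple_graph (T : finType) (e : rel T) : Prop :=
  symmetric e /\ irreflexive e.

Definition bipartition (T : finType) (e : rel T) (X Y : {set T}) : Prop :=
  [/\ X :&: Y = set0, X :|: Y = setT &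
      forall u v, e u v -> (u \in X) && (v \in Y) || (u \in Y) && (v \in X)].

Definition deg (T : finType) (e : rel T) (v : T) : nat := #|[set u | e v u]|.

(** Put [n = |X|], [m = |Y|] and write [N_Z(v)] for the non-neighbours of [v]
    in [Z].  For a non-edge [xy] the summand splits as
    [m / |N_Y(x)| - n / |N_X(y)|], since [|N_Y(x)| = m - d(x)] and
    [|N_X(y)| = n - d(y)].  Grouping the first terms by [x], each [x] contributes
    [|N_Y(x)|] copies of [m / |N_Y(x)|], i.e. exactly [m] because [N_Y(x)] is
    nonempty; grouping the second terms by [y], each [y] contributes at most [n]
    (and nothing when [N_X(y)] is empty).  Hence the sum is at least
    [n m - m n = 0]. *)

From mathcomp Require Import all_boot all_order all_algebra.
From mathcomp Require Import ring.
Import Order.TTheory GRing.Theory Num.Theory.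
Set Implicit Arguments.
Unset Strict Implicit.
Unset Printing Implicit Defensive.

Local Open Scope ring_scope.

Definition non_nbhd (T : finType) (e : rel T) (Z : {set T}) (v : T) : {set T} :=
  [set z in Z | ~~ e v z].

Lemma card_non_nbhd (T : finType) (e : rel T) (Z : {set T}) (v : T) :
  [set u | e v u] \subset Z -> #|non_nbhd e Z v| = (#|Z| - deg e v)%N.
Proof.
move=> sNZ; have -> : non_nbhd e Z v = Z :\: [set u | e v u].
  by apply/setP => z; rewrite !inE andbC.
by rewrite cardsD (setIidPr sNZ).
Qed.

Lemma natr_card_non_nbhd (R : nzRingType) (T : finType) (e : rel T)
    (Z : {set T}) (v : T) :
  [set u | e v u] \subset Z ->
  (#|Z|%:R - (deg e v)%:R : R) = #|non_nbhd e Z v|%:R.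
Proof. by move=> sNZ; rewrite card_non_nbhd // natrB // subset_leq_card. Qed.

Lemma sumr_div_card (R : numFieldType) (T : finType) (A : {pred T}) (c : R) :
  0 <= c -> \sum_(z in A) c / #|A|%:R <= c.
Proof.
move=> c_ge0; rewrite sumr_const -(mulr_natr (c / _)).
have [->|A_neq0] := eqVneq #|A| 0%N; first by rewrite mulr0.
by rewrite divfK // pnatr_eq0.
Qed.

Lemma sumr_div_card_eq (R : numFieldType) (T : finType) (A : {pred T}) (c : R) :
  (0 < #|A|)%N -> \sum_(z in A) c / #|A|%:R = c.
Proof.
by move=> A_gt0; rewrite sumr_const -(mulr_natr (c / _)) divfK // pnatr_eq0 -lt0n.
Qed.

Lemma sub_div_complements (F : fieldType) (n m a b : F) :
  n - b != 0 -> m - a != 0 ->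
  (n * a - m * b) / ((n - b) * (m - a)) = m / (m - a) - n / (n - b).
Proof. by move=> nb_neq0 ma_neq0; field; rewrite nb_neq0 ma_neq0. Qed.

Lemma bipartition_sym (T : finType) (e : rel T) (X Y : {set T}) :
  bipartition e X Y -> bipartition e Y X.
Proof.
case=> XY0 XYT e_XY; split; [by rewrite setIC | by rewrite setUC |].
by move=> u v /e_XY; rewrite orbC.
Qed.

Lemma bipartition_nbhd_sub (T : finType) (e : rel T) (X Y : {set T}) (x : T) :
  bipartition e X Y -> x \in X -> [set u | e x u] \subset Y.
Proof.
case=> XY0 _ e_XY xX; apply/subsetP => u; rewrite inE => /e_XY.
case/orP => /andP[// xY _].
by have := in_set0 x; rewrite -XY0 inE xX xY.
Qed.

Section NonEdgeSum.

Variables (R : realFieldType) (T : finType) (e : rel T) (X Y : {set T}).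
Hypotheses (e_sym : symmetric e) (bipXY : bipartition e X Y).

Let bipYX := bipartition_sym bipXY.

Lemma in_non_nbhd_sym x y : (x \in non_nbhd e X y) = (x \in X) && ~~ e x y.
Proof. by rewrite inE e_sym. Qed.

Lemma non_edge_term x y : x \in X -> y \in Y -> ~~ e x y ->
  (#|X|%:R * (deg e x)%:R - #|Y|%:R * (deg e y)%:R) /
    ((#|X|%:R - (deg e y)%:R) * (#|Y|%:R - (deg e x)%:R))
  = #|Y|%:R / #|non_nbhd e Y x|%:R - #|X|%:R / #|non_nbhd e X y|%:R :> R.
Proof.
move=> xX yY nxy.
have NxY := bipartition_nbhd_sub bipXY xX; have NyX := bipartition_nbhd_sub bipYX yY.
rewrite sub_div_complements !natr_card_non_nbhd // pnatr_eq0 -lt0n;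
  apply/card_gt0P; [exists x; rewrite in_non_nbhd_sym | exists y; rewrite inE];
  exact/andP.
Qed.

Lemma sum_non_edges_row :
  (forall x, x \in X -> exists2 y, y \in Y & ~~ e x y) ->
  \sum_(x in X) \sum_(y in Y | ~~ e x y) (#|Y|%:R / #|non_nbhd e Y x|%:R : R)
  = #|Y|%:R *+ #|X|.
Proof.
move=> X_nonfull; rewrite -(sumr_const [in X]); apply: eq_bigr => x xX.
rewrite (eq_bigl [in non_nbhd e Y x]) => [|y]; last by rewrite inE.
apply/sumr_div_card_eq/card_gt0P.
by have [y yY nxy] := X_nonfull x xX; exists y; rewrite inE yY.
Qed.

Lemma sum_non_edges_col_le :
  \sum_(x in X) \sum_(y in Y | ~~ e x y) (#|X|%:R / #|non_nbhd e X y|%:R : R)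
  <= #|X|%:R *+ #|Y|.
Proof.
rewrite (exchange_big_dep [in Y]) /= => [|x y _ /andP[] //].
rewrite -(sumr_const [in Y]); apply: ler_sum => y yY.
rewrite (eq_bigl [in non_nbhd e X y]) => [|x]; last by rewrite in_non_nbhd_sym yY.
exact: sumr_div_card.
Qed.

End NonEdgeSum.

Theorem proposition6p2 (R : realFieldType) (T : finType) (e : rel T)
    (X Y : {set T}) :
  simple_graph e -> bipartition e X Y ->
  (forall x, x \in X -> exists2 y, y \in Y & ~~ e x y) ->
  0 <= \sum_(x in X) \sum_(y in Y | ~~ e x y)
         ((#|X|%:R * (deg e x)%:R - #|Y|%:R * (deg e y)%:R) /
          ((#|X|%:R - (deg e y)%:R) * (#|Y|%:R - (deg e x)%:R)) : R).
Proof.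
move=> [e_sym _] bipXY X_nonfull.
rewrite (eq_bigr (fun x => \sum_(y in Y | ~~ e x y)
    (#|Y|%:R / #|non_nbhd e Y x|%:R - #|X|%:R / #|non_nbhd e X y|%:R))).
  rewrite (eq_bigr _ (fun x _ => sumrB _ _ _ _)) sumrB subr_ge0.
  rewrite sum_non_edges_row //.
  apply: le_trans (sum_non_edges_col_le R X Y e_sym) _.
  by rewrite -!mulrnA mulnC.
move=> x xX; apply: eq_bigr => y /andP[yY nxy].
exact: non_edge_term.
Qed.
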